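(* Assume $h,\tau$ are such that $\int_0^T\int_{\mathcal D}\tilde Q_{h\tau}(t)\,dx\,dt>0$, and let $\rho>0$. For $V\in\mathbb U_{h\tau}$ define $$\mu(V)=\frac{\max\big\{\int_0^T\int_{\mathcal D}\mathbb E[X_{h\tau}(V)]\,dx\,dt-\delta,\,0\big\}}{\rho\int_0^T\int_{\mathcal D}\tilde Q_{h\tau}(t)\,dx\,dt},\qquad \mathbb R_hV:=V-\rho\,\mu(V)\,\tilde M_{h\tau}.$$ Then for every $V\in\mathbb U_{h\tau}$, $$\mathbb E\big[[V-\mathbb R_hV,\,W-\mathbb R_hV]\big]\le0\qquad\forall W\in\mathbb U_{h\tau,\delta},$$ and for all $V,P\in\mathbb U_{h\tau}$, $$\int_0^T\mathbb E\|\mathbb R_hV(t)-\mathbb R_hP(t)\|^2dt\le\int_0^T\mathbb E\|V(t)-P(t)\|^2dt.$$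
   Context: Setting: $T>0$; complete probability space with $\mathbb F=\{\mathcal F_t\}$ the natural filtration of a one-dimensional standard Brownian motion $W_t$; $\mathcal D\subset\mathbb R^d$ ($d=1,2,3$) bounded with smooth boundary; $\|\cdot\|$ the $L^2(\mathcal D)$ norm; $[U,V]=\int_0^T\int_{\mathcal D}UV\,dx\,dt$. Data $\delta\in\mathbb R$, $X_0\in L^2(\mathcal D)$, $\sigma$ adapted square-integrable $L^2(\mathcal D)$-valued. Finite elements: regular triangulation with mesh size $h$; $\mathbb V_h^1$ continuous piecewise linears vanishing on $\partial\mathcal D$; $\Pi^1_h$ the $L^2$-projection onto $\mathbb V^1_h$; $\Delta_h$ with $(-\Delta_h\xi_h,\phi_h)=(\nabla\xi_h,\nabla\phi_h)$. Time grid $t_n=n\tau$, $\tau=T/N\le1$, $\Delta W_{n+1}=W_{t_{n+1}}-W_{t_n}$. $\mathbb U_{h\tau}$: $\mathbb F$-adapted square-integrable $\mathbb V^1_h$-valued processes with $U(t)=U(t_n)$ on $[t_n,t_{n+1})$. For $V\in\mathbb U_{h\tau}$, $X_{h\tau}(V)$ is defined by $X(t_{n+1})-X(t_n)=\tau[\Delta_hX(t_{n+1})+V(t_n)]+\Pi^1_h\sigma(t_n)\Delta W_{n+1}$, $X(0)=\Pi^1_hX_0$, and $X(t)=\mathbb E[X(t_{n+1})|\mathcal F_{t_n}]$ for $t\in(t_n,t_{n+1})$. $\mathbb U_{h\tau,\delta}=\{V\in\mathbb U_{h\tau}:\int_0^T\int_{\mathcal D}\mathbb E[X_{h\tau}(V)]dxdt\le\delta\}$.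 Deterministic functions: $\tilde M_{h\tau}$ ($\mathbb V^1_h$-valued, $\tilde M(t)=\tilde M(t_n)$ on $[t_n,t_{n+1})$) solves $\tilde M_{h\tau}(t_{n+1})-\tilde M_{h\tau}(t_n)=\tau[-\Delta_h\tilde M_{h\tau}(t_n)-\Pi^1_h1]$, $\tilde M_{h\tau}(T)=0$; $\tilde Q_{h\tau}$ ($\mathbb V^1_h$-valued, $\tilde Q(t)=\tilde Q(t_{n+1})$ on $(t_n,t_{n+1}]$) solves $\tilde Q_{h\tau}(t_{n+1})-\tilde Q_{h\tau}(t_n)=\tau[\Delta_h\tilde Q_{h\tau}(t_{n+1})+\tilde M_{h\tau}(t_n)]$, $\tilde Q_{h\tau}(0)=0$. *)

From HB Require Import structures.
From mathcomp Require Import all_boot all_order all_algebra.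
From mathcomp Require Import all_classical all_reals all_analysis.
From mathcomp Require Import normal_distribution.
Set Implicit Arguments. Unset Strict Implicit. Unset Printing Implicit Defensive.
Import Order.TTheory GRing.Theory Num.Theory.
Import numFieldNormedType.Exports.
Local Open Scope classical_set_scope.
Local Open Scope ring_scope.

(* Spatial discretisation: an element of V_h^1 is represented by its  *)
(* coefficient row vector u : 'rV_m w.r.t. the nodal basis (phi_i).    *)
(* Mss = mass matrix (phi_i,phi_j), Stf = stiffness matrix            *)
(* (grad phi_i, grad phi_j), bvec_i = \int_D phi_i dx.                 *)
Section spatial.
Context {R : realType} {m : nat}.

Definition l2ip (Mss : 'M[R]_m) (u v : 'rV[R]_m) : R := (u *m Mss *m v^T) 0 0.
Definition stiff (Stf : 'M[R]_m) (u v : 'rV[R]_m) : R := (u *m Stf *m v^T) 0 0.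
Definition intD (bvec : 'rV[R]_m) (u : 'rV[R]_m) : R := (u *m bvec^T) 0 0.

Definition sym_posdef (A : 'M[R]_m) : Prop :=
  A^T = A /\ forall v : 'rV[R]_m, v != 0 -> 0 < (v *m A *m v^T) 0 0.

Definition is_discrete_laplacian (Mss Stf : 'M[R]_m) (Lh : 'rV[R]_m -> 'rV[R]_m) :=
  forall u v, l2ip Mss (- Lh u) v = stiff Stf u v.

Definition is_proj_one (Mss : 'M[R]_m) (bvec : 'rV[R]_m) (Pi1 : 'rV[R]_m) :=
  forall v, l2ip Mss Pi1 v = intD bvec v.

End spatial.

Section proba.
Context {R : realType} {d : measure_display} {Omega : measurableType d}.
Variable P : probability Omega R.

Definition meas_wrt (G : set (set Omega)) (f : Omega -> R) : Prop :=
  forall B : set R, measurable B -> G (f @^-1` B).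

Definition gen_nat (W : R -> Omega -> R) (t : R) : set (set Omega) :=
  <<s setT, [set A | exists r (B : set R),
              [/\ 0 <= r, r <= t, measurable B & A = W r @^-1` B]] >>.

Definition natF (W : R -> Omega -> R) (t : R) : set (set Omega) :=
  [set A | measurable A /\ exists B, gen_nat W t B /\
            P.-negligible ((A `\` B) `|` (B `\` A))].

Definition indep_of (G : set (set Omega)) (Z : Omega -> R) : Prop :=
  forall A (B : set R), G A -> measurable B ->
    P (A `&` Z @^-1` B) = (P A * P (Z @^-1` B))%E.

Definition std_BM (W : R -> Omega -> R) : Prop :=
  [/\ (forall t, measurable_fun setT (W t)),
      (forall w, W 0 w = 0),
      (forall w, {within `[0, +oo[, continuous (fun t => W t w)}) &
      (forall s t, 0 <= s -> s < t ->
         (forall B : set R, measurable B ->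
            P ((fun w => W t w - W s w) @^-1` B) = normal_prob 0 (Num.sqrt (t - s)) B)
         /\ indep_of (gen_nat W s) (fun w => W t w - W s w))].

Definition cexp_version (G : set (set Omega)) (Z Y : Omega -> R) : Prop :=
  [/\ P.-integrable setT (EFin \o Z), meas_wrt G Y,
      P.-integrable setT (EFin \o Y) &
      forall A, G A -> (\int[P]_(x in A) (Y x)%:E = \int[P]_(x in A) (Z x)%:E)%E].

End proba.

(* Time-discrete processes: a process U in U_{h tau} (piecewise        *)
(* constant, U(t) = U(t_n) on [t_n,t_{n+1})) is represented by the     *)
(* sequence n |-> U(t_n), n = 0..N-1, of V_h^1-valued random vectors. *)
Section procs.
Context {R : realType} {d : measure_display} {Omega : measurableType d} {m : nat}.
Variable P : probability Omega R.

Definition proc := nat -> Omega -> 'rV[R]_m.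

Definition inU (N : nat) (F : nat -> set (set Omega)) (Mss : 'M[R]_m) (U : proc) :=
  forall n, (n < N)%N ->
    (forall i : 'I_m, meas_wrt (F n) (fun w => U n w 0 i)) /\
    P.-integrable setT (fun w => (l2ip Mss (U n w) (U n w))%:E).

Definition Evec (X : Omega -> 'rV[R]_m) : 'rV[R]_m :=
  \row_i (\int[P]_w (X w 0 i)).

Definition Ebr (N : nat) (tau : R) (Mss : 'M[R]_m) (A B : proc) : R :=
  \int[P]_w (\sum_(n < N) tau * l2ip Mss (A n w) (B n w)).

Definition Enorm2 (N : nat) (tau : R) (Mss : 'M[R]_m) (A : proc) : R :=
  \sum_(n < N) tau * \int[P]_w (l2ip Mss (A n w) (A n w)).

End procs.

(* X_{h tau}(V) depends affinely on V, and its linear part is adjoint to the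
   backward scheme for M~: telescoping the discrete product rule for
   (M~(t_n), X(t_n)) gives J(V) - J(V') = [M~, E V - E V'] for the cost
   J(V) = \int\int E[X_{h tau}(V)], and likewise \int\int Q~ = [M~, M~] =: K > 0.
   So U_{h tau,delta} is a half-space with normal M~ and R_h is the projection
   onto it along M~.  With k = rho mu(V) one has k K = (J V - delta)^+, hence
   E[[V - R_h V, W - R_h V]] = k (J W - J V) + k^2 K = k (J W - delta) <= 0
   when k > 0.  Likewise E||R_h V - R_h P||^2 = E||V - P||^2 - 2 c (J V - J P)
   + c^2 K with c K = (J V - delta)^+ - (J P - delta)^+, and c^2 K <= c (J V - J P)
   because x |-> (x - delta)^+ is firmly non-expansive. *)
From HB Require Import structures.
From mathcomp Require Import all_boot all_order all_algebra.
From mathcomp Require Import all_classical all_reals all_analysis.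
From mathcomp Require Import ring lra.
From mathcomp Require Import measurable_realfun.
Set Implicit Arguments. Unset Strict Implicit. Unset Printing Implicit Defensive.
Import Order.TTheory GRing.Theory Num.Theory.
Local Open Scope classical_set_scope.
Local Open Scope ring_scope.

Section inner_product.
Context {R : realType} {m : nat}.
Implicit Types (M : 'M[R]_m) (u v w a : 'rV[R]_m).

Lemma l2ipDl M u v w : l2ip M (u + v) w = l2ip M u w + l2ip M v w.
Proof. by rewrite /l2ip !mulmxDl mxE. Qed.

Lemma l2ipDr M u v w : l2ip M u (v + w) = l2ip M u v + l2ip M u w.
Proof. by rewrite /l2ip linearD /= mulmxDr mxE. Qed.

Lemma l2ipZl M c u w : l2ip M (c *: u) w = c * l2ip M u w.
Proof. by rewrite /l2ip -!scalemxAl mxE. Qed.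

Lemma l2ipZr M c u w : l2ip M u (c *: w) = c * l2ip M u w.
Proof. by rewrite /l2ip linearZ /= -scalemxAr mxE. Qed.

Lemma l2ipNl M u w : l2ip M (- u) w = - l2ip M u w.
Proof. by rewrite -scaleN1r l2ipZl mulN1r. Qed.

Lemma l2ipNr M u w : l2ip M u (- w) = - l2ip M u w.
Proof. by rewrite -scaleN1r l2ipZr mulN1r. Qed.

Lemma l2ipBl M u v w : l2ip M (u - v) w = l2ip M u w - l2ip M v w.
Proof. by rewrite l2ipDl l2ipNl. Qed.

Lemma l2ipBr M u v w : l2ip M u (v - w) = l2ip M u v - l2ip M u w.
Proof. by rewrite l2ipDr l2ipNr. Qed.

Lemma l2ip0l M w : l2ip M 0 w = 0.
Proof. by rewrite /l2ip !mul0mx mxE. Qed.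

Lemma l2ip0r M w : l2ip M w 0 = 0.
Proof. by rewrite /l2ip trmx0 mulmx0 mxE. Qed.

Lemma l2ip_trmx M u w : l2ip M u w = (w *m (u *m M)^T) 0 0.
Proof. by rewrite /l2ip -[in LHS](trmxK (u *m M *m w^T)) mxE trmx_mul trmxK. Qed.

Lemma l2ip_sum M u w : l2ip M u w = \sum_j w 0 j * \sum_i u 0 i * M i j.
Proof. by rewrite l2ip_trmx mxE; apply: eq_bigr => j _; rewrite !mxE. Qed.

Lemma l2ipC M u w : M^T = M -> l2ip M u w = l2ip M w u.
Proof. by move=> MT; rewrite l2ip_trmx trmx_mul MT mulmxA. Qed.

Lemma stiffDl S u v w : stiff S (u + v) w = stiff S u w + stiff S v w.
Proof. by rewrite /stiff !mulmxDl mxE. Qed.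

Lemma stiffNl S u w : stiff S (- u) w = - stiff S u w.
Proof. by rewrite /stiff !mulNmx mxE. Qed.

Lemma stiffC S u w : S^T = S -> stiff S u w = stiff S w u.
Proof. exact: (@l2ipC S). Qed.

Variables (M : 'M[R]_m) (M_posdef : sym_posdef M).

Lemma l2ip_ge0 u : 0 <= l2ip M u u.
Proof.
have [->|u_neq0] := eqVneq u 0; first by rewrite l2ip0l.
exact/ltW/M_posdef.2.
Qed.

Lemma l2ip_eq0 u : l2ip M u u = 0 -> u = 0.
Proof.
move=> u0; apply/eqP/negPn/negP => u_neq0.
by have := M_posdef.2 u u_neq0; rewrite -/(l2ip M u u) u0 ltxx.
Qed.

Lemma l2ip_sqrB u v :
  l2ip M (u - v) (u - v) = l2ip M u u - 2 * l2ip M u v + l2ip M v v.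
Proof. by rewrite !(l2ipBl, l2ipBr) (l2ipC v u M_posdef.1); ring. Qed.

Lemma l2ip_sqrD u v :
  l2ip M (u + v) (u + v) = l2ip M u u + 2 * l2ip M u v + l2ip M v v.
Proof. by rewrite !(l2ipDl, l2ipDr) (l2ipC v u M_posdef.1); ring. Qed.

Lemma l2ip_sqrB_le u v : l2ip M (u - v) (u - v) <= 2 * l2ip M u u + 2 * l2ip M v v.
Proof. have := l2ip_ge0 (u + v); rewrite l2ip_sqrB l2ip_sqrD; lra. Qed.

Lemma normr_l2ip_le u v : `|l2ip M u v| <= (l2ip M u u + l2ip M v v) / 2.
Proof.
have := l2ip_ge0 (u + v); have := l2ip_ge0 (u - v).
rewrite l2ip_sqrB l2ip_sqrD ler_norml => ? ?; apply/andP; split; lra.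
Qed.

Lemma sym_posdef_unitmx : M \in unitmx.
Proof.
rewrite unitmxE unitfE; apply/negP => /det0P [v v_neq0 vM].
by have := M_posdef.2 v v_neq0; rewrite vM mul0mx mxE ltxx.
Qed.

Definition coord_riesz (i : 'I_m) : 'rV[R]_m := delta_mx 0 i *m invmx M.

Lemma l2ip_coord_riesz i v : l2ip M v (coord_riesz i) = v 0 i.
Proof.
rewrite /l2ip /coord_riesz trmx_mul trmx_inv M_posdef.1 -mulmxA (mulmxA M).
by rewrite mulmxV ?sym_posdef_unitmx // mul1mx trmx_delta -colE mxE.
Qed.

Lemma normr_coord_le i v :
  `|v 0 i| <= (l2ip M v v + l2ip M (coord_riesz i) (coord_riesz i)) / 2.
Proof. by rewrite -(l2ip_coord_riesz i v) normr_l2ip_le. Qed.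

End inner_product.

Definition l2ipT {R : realType} {m : nat} (N : nat) (tau : R) (M : 'M[R]_m)
  (f g : nat -> 'rV[R]_m) : R :=
  \sum_(n < N) tau * l2ip M (f n) (g n).

Section discrete_laplacian.
Context {R : realType} {m : nat}.
Variables (Mss Stf : 'M[R]_m) (Mss_posdef : sym_posdef Mss) (Stf_sym : Stf^T = Stf).
Variable Lh : 'rV[R]_m -> 'rV[R]_m.
Hypothesis Lh_laplacian : is_discrete_laplacian Mss Stf Lh.

Lemma l2ip_laplacian u v : l2ip Mss (Lh u) v = - stiff Stf u v.
Proof. by rewrite -Lh_laplacian l2ipNl opprK. Qed.

Lemma laplacianB u v : Lh (u - v) = Lh u - Lh v.
Proof.
apply/eqP; rewrite eq_sym -subr_eq0; apply/eqP; apply: (l2ip_eq0 Mss_posdef).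
by rewrite !l2ipBl !l2ip_laplacian stiffDl stiffNl; ring.
Qed.

Lemma l2ip_laplacian_sym u v : l2ip Mss (Lh u) v = l2ip Mss u (Lh v).
Proof.
by rewrite l2ip_laplacian (l2ipC _ _ Mss_posdef.1) l2ip_laplacian (stiffC _ _ Stf_sym).
Qed.

Lemma discrete_duality (N : nat) (tau : R) (bvec Pi1 : 'rV[R]_m)
    (Pi1_proj : is_proj_one Mss bvec Pi1) (Mt e g : nat -> 'rV[R]_m) :
  Mt N = 0 -> (forall n, (n < N)%N -> Mt n.+1 - Mt n = tau *: (- Lh (Mt n) - Pi1)) ->
  e 0%N = 0 -> (forall n, (n < N)%N -> e n.+1 - e n = tau *: (Lh (e n.+1) + g n)) ->
  \sum_(n < N) tau * intD bvec (e n.+1) = l2ipT N tau Mss Mt g.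
Proof.
move=> MtN Mt_step e0 e_step.
pose f n := l2ip Mss (Mt n) (e n).
have product_rule n : (n < N)%N ->
    tau * intD bvec (e n.+1) = (f n - f n.+1) + tau * l2ip Mss (Mt n) (g n).
  move=> ltnN.
  have Mt_next : Mt n.+1 = Mt n + tau *: (- Lh (Mt n) - Pi1).
    by rewrite -Mt_step // addrC subrK.
  have e_next : e n.+1 = e n + tau *: (Lh (e n.+1) + g n).
    by rewrite -e_step // addrC subrK.
  rewrite /f Mt_next l2ipDl l2ipZl l2ipBl l2ipNl l2ip_laplacian_sym Pi1_proj.
  by rewrite {2}e_next l2ipDr l2ipZr l2ipDr; ring.
rewrite /l2ipT (eq_bigr (fun n : 'I_N => (f n - f n.+1) + tau * l2ip Mss (Mt n) (g n)));
  last by move=> [n ltnN] _; apply: product_rule.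
rewrite big_split /= (eq_bigr (fun n : 'I_N => - (f n.+1 - f n))); last first.
  by move=> n _; rewrite opprB.
rewrite sumrN -(big_mkord xpredT (fun n => f n.+1 - f n)) telescope_sumr //.
by rewrite /f MtN e0 l2ip0l l2ip0r subrr oppr0 add0r.
Qed.

End discrete_laplacian.

Section real_integrals.
Context {R : realType} {d : measure_display} {Omega : measurableType d}.
Variable P : probability Omega R.

Definition rintegrable (f : Omega -> R) := P.-integrable setT (EFin \o f).

Lemma rintegrable_ext f g : rintegrable f -> f =1 g -> rintegrable g.
Proof. by move=> f_int fg; apply: eq_integrable f_int => // w _ /=; rewrite fg. Qed.

Lemma rintegrable_cst k : rintegrable (fun _ => k).
Proof. exact: finite_measure_integrable_cst. Qed.

Lemma rintegrableD f g : rintegrable f -> rintegrable g -> rintegrable (fun w => f w + g w).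
Proof. by move=> f_int g_int; apply: eq_integrable (integrableD measurableT f_int g_int). Qed.

Lemma rintegrableB f g : rintegrable f -> rintegrable g -> rintegrable (fun w => f w - g w).
Proof. by move=> f_int g_int; apply: eq_integrable (integrableB measurableT f_int g_int). Qed.

Lemma rintegrableZl k f : rintegrable f -> rintegrable (fun w => k * f w).
Proof. by move=> f_int; apply: eq_integrable (integrableZl measurableT k f_int). Qed.

Lemma rintegrableZr k f : rintegrable f -> rintegrable (fun w => f w * k).
Proof.
by move=> f_int; apply: rintegrable_ext (rintegrableZl k f_int) _ => w; rewrite mulrC.
Qed.

Lemma rintegrable_sum I (s : seq I) (f : I -> Omega -> R) :
  (forall i, rintegrable (f i)) -> rintegrable (fun w => \sum_(i <- s) f i w).
Proof.
move=> f_int; elim: s => [|a s IHs].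
  by apply: rintegrable_ext (rintegrable_cst 0) _ => w; rewrite big_nil.
by apply: rintegrable_ext (rintegrableD (f_int a) IHs) _ => w; rewrite big_cons.
Qed.

Lemma rintegrable_le (f g : Omega -> R) : measurable_fun setT f ->
  (forall w, `|f w| <= g w) -> rintegrable g -> rintegrable f.
Proof.
move=> f_meas fg g_int; apply: le_integrable g_int => //; first exact/measurable_EFinP.
by move=> w _ /=; rewrite lee_fin (le_trans (fg w)) ?ler_norm.
Qed.

Lemma Rintegral_cst_prob k : \int[P]_w k = k.
Proof.
rewrite Rintegral_cst // [X in _ * fine X](_ : _ = 1%E) ?mulr1 //.
exact: probability_setT.
Qed.

Lemma Rintegral_sum I (s : seq I) (f : I -> Omega -> R) :
  (forall i, rintegrable (f i)) ->
  \int[P]_w (\sum_(i <- s) f i w) = \sum_(i <- s) \int[P]_w f i w.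
Proof.
move=> f_int; elim: s => [|a s IHs].
  by rewrite big_nil -[RHS](Rintegral_cst_prob 0); apply: eq_Rintegral => w _; rewrite big_nil.
rewrite big_cons -IHs -RintegralD //; last 2 first.
- exact: f_int.
- exact: rintegrable_sum.
by apply: eq_Rintegral => w _; rewrite big_cons.
Qed.

End real_integrals.

Section random_vectors.
Context {R : realType} {d : measure_display} {Omega : measurableType d} {m : nat}.
Variable P : probability Omega R.
Implicit Types X Y : Omega -> 'rV[R]_m.

Definition coord_measurable X := forall i : 'I_m, measurable_fun setT (fun w => X w 0 i).
Definition coord_integrable X := forall i : 'I_m, rintegrable P (fun w => X w 0 i).

Lemma coord_measurableB X Y : coord_measurable X -> coord_measurable Y ->
  coord_measurable (fun w => X w - Y w).
Proof.
move=> X_meas Y_meas i; under eq_fun do rewrite !mxE.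
exact: measurable_funB.
Qed.

Lemma coord_integrableD X Y : coord_integrable X -> coord_integrable Y ->
  coord_integrable (fun w => X w + Y w).
Proof.
move=> X_int Y_int i.
by apply: rintegrable_ext (rintegrableD (X_int i) (Y_int i)) _ => w; rewrite mxE.
Qed.

Lemma coord_integrableB X Y : coord_integrable X -> coord_integrable Y ->
  coord_integrable (fun w => X w - Y w).
Proof.
move=> X_int Y_int i.
by apply: rintegrable_ext (rintegrableB (X_int i) (Y_int i)) _ => w; rewrite !mxE.
Qed.

Lemma coord_integrable_cst (c : 'rV[R]_m) : coord_integrable (fun _ => c).
Proof. by move=> i; exact: rintegrable_cst. Qed.

Lemma rintegrable_mulmx X (c : 'cV[R]_m) : coord_integrable X ->
  rintegrable P (fun w => (X w *m c) 0 0).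
Proof.
move=> X_int.
apply: rintegrable_ext
  (rintegrable_sum (index_enum 'I_m) (fun j => rintegrableZr (c j 0) (X_int j))) _.
by move=> w; rewrite mxE.
Qed.

Lemma Rintegral_mulmx X (c : 'cV[R]_m) : coord_integrable X ->
  \int[P]_w ((X w *m c) 0 0) = (Evec P X *m c) 0 0.
Proof.
move=> X_int; rewrite mxE.
under eq_Rintegral do rewrite mxE.
rewrite Rintegral_sum; last by move=> j; apply: rintegrableZr.
by apply: eq_bigr => j _; rewrite RintegralZr ?mxE //; exact: X_int.
Qed.

Lemma rintegrable_l2ip M a X : coord_integrable X ->
  rintegrable P (fun w => l2ip M a (X w)).
Proof.
move=> X_int; apply: rintegrable_ext (rintegrable_mulmx ((a *m M)^T) X_int) _.
by move=> w; rewrite l2ip_trmx.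
Qed.

Lemma Rintegral_l2ip M a X : coord_integrable X ->
  \int[P]_w (l2ip M a (X w)) = l2ip M a (Evec P X).
Proof.
move=> X_int; rewrite l2ip_trmx -Rintegral_mulmx //.
by apply: eq_Rintegral => w _; rewrite l2ip_trmx.
Qed.

Lemma rintegrable_intD b X : coord_integrable X -> rintegrable P (fun w => intD b (X w)).
Proof. exact: rintegrable_mulmx. Qed.

Lemma Rintegral_intD b X : coord_integrable X ->
  \int[P]_w (intD b (X w)) = intD b (Evec P X).
Proof. exact: Rintegral_mulmx. Qed.

Lemma EvecD X Y : coord_integrable X -> coord_integrable Y ->
  Evec P (fun w => X w + Y w) = Evec P X + Evec P Y.
Proof.
move=> X_int Y_int; apply/rowP => i; rewrite !mxE -RintegralD //.
- by apply: eq_Rintegral => w _; rewrite !mxE.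
- exact: X_int.
- exact: Y_int.
Qed.

Lemma EvecB X Y : coord_integrable X -> coord_integrable Y ->
  Evec P (fun w => X w - Y w) = Evec P X - Evec P Y.
Proof.
move=> X_int Y_int; apply/rowP => i; rewrite !mxE -RintegralB //.
- by apply: eq_Rintegral => w _; rewrite !mxE.
- exact: X_int.
- exact: Y_int.
Qed.

Lemma Evec_cst (c : 'rV[R]_m) : Evec P (fun _ => c) = c.
Proof. by apply/rowP => i; rewrite mxE Rintegral_cst_prob. Qed.

Lemma measurable_l2ip M X Y : coord_measurable X -> coord_measurable Y ->
  measurable_fun setT (fun w => l2ip M (X w) (Y w)).
Proof.
move=> X_meas Y_meas; under eq_fun do rewrite l2ip_sum.
apply: measurable_sum => j; apply: measurable_funM => //.
by apply: measurable_sum => i; exact: measurable_funM.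
Qed.

Lemma coord_integrable_l2ip M X : sym_posdef M -> coord_measurable X ->
  rintegrable P (fun w => l2ip M (X w) (X w)) -> coord_integrable X.
Proof.
move=> M_posdef X_meas X_sq i.
apply: (rintegrable_le (X_meas i) (fun w => normr_coord_le M_posdef i (X w))).
by apply: rintegrableZr; apply: rintegrableD X_sq (rintegrable_cst _ _).
Qed.

Lemma rintegrable_l2ip_sqrB M X Y : sym_posdef M ->
  coord_measurable X -> coord_measurable Y ->
  rintegrable P (fun w => l2ip M (X w) (X w)) -> rintegrable P (fun w => l2ip M (Y w) (Y w)) ->
  rintegrable P (fun w => l2ip M (X w - Y w) (X w - Y w)).
Proof.
move=> M_posdef X_meas Y_meas X_sq Y_sq.
apply: (rintegrable_le _ (fun w => _) (rintegrableD (rintegrableZl 2 X_sq) (rintegrableZl 2 Y_sq))).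
- by apply: measurable_l2ip; exact: coord_measurableB.
- by move=> w; rewrite ger0_norm ?l2ip_ge0 ?l2ip_sqrB_le.
Qed.

End random_vectors.

Lemma natF_setT {R : realType} {d : measure_display} {Omega : measurableType d}
  (P : probability Omega R) W t : natF P W t setT.
Proof.
split; first exact: measurableT.
exists setT; split; last by rewrite setDv setU0; exact: negligible_set0.
by move=> G [[G0 GD _] _]; rewrite -(setD0 setT); exact: GD.
Qed.

Section adapted_processes.
Context {R : realType} {d : measure_display} {Omega : measurableType d} {m : nat}.
Variables (P : probability Omega R) (N : nat) (tau : R).
Variables (F : nat -> set (set Omega)) (Mss : 'M[R]_m) (Mss_posdef : sym_posdef Mss).
Hypothesis F_measurable : forall n A, F n A -> measurable A.
Local Notation U := (inU P N F Mss).
Local Notation E := (Evec P).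
Implicit Types (V Q Wc : @proc R d Omega m) (a : nat -> 'rV[R]_m).

Lemma inU_coord_measurable V n : U V -> (n < N)%N -> coord_measurable (V n).
Proof.
move=> UV ltnN i _ B mB; rewrite setTI.
exact: F_measurable ((UV n ltnN).1 i B mB).
Qed.

Lemma inU_coord_integrable V n : U V -> (n < N)%N -> coord_integrable P (V n).
Proof.
move=> UV ltnN; apply: coord_integrable_l2ip Mss_posdef _ (UV n ltnN).2.
exact: inU_coord_measurable.
Qed.

Lemma Ebr_deterministic_l a (B : @proc R d Omega m) :
  (forall n, (n < N)%N -> coord_integrable P (B n)) ->
  Ebr P N tau Mss (fun n _ => a n) B = l2ipT N tau Mss a (fun n => E (B n)).
Proof.
move=> B_int; rewrite /Ebr Rintegral_sum => [|[n ltnN]]; last first.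
  exact: rintegrableZl (rintegrable_l2ip _ _ (B_int _ ltnN)).
apply: eq_bigr => -[n ltnN] _.
rewrite RintegralZl ?Rintegral_l2ip //; first exact: B_int ltnN.
exact: rintegrable_l2ip (B_int _ ltnN).
Qed.

Lemma Ebr_shift a k V Wc : U V -> U Wc ->
  Ebr P N tau Mss (fun n w => V n w - (V n w - k *: a n))
                  (fun n w => Wc n w - (V n w - k *: a n))
  = k * l2ipT N tau Mss a (fun n => E (Wc n) - E (V n)) + k * k * l2ipT N tau Mss a a.
Proof.
move=> UV UWc.
have -> : (fun n w => V n w - (V n w - k *: a n)) = fun n _ => k *: a n.
  by apply/funext => n; apply/funext => w; rewrite opprB addrC subrK.
have -> : (fun n w => Wc n w - (V n w - k *: a n)) =
          fun n w => (Wc n w - V n w) + k *: a n.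
  by apply/funext => n; apply/funext => w; rewrite opprB addrCA addrC.
have diff_int n : (n < N)%N -> coord_integrable P (fun w => Wc n w - V n w).
  by move=> ltnN; apply: coord_integrableB; exact: inU_coord_integrable.
rewrite Ebr_deterministic_l => [|n ltnN]; last first.
  by apply: coord_integrableD; [exact: diff_int|exact: coord_integrable_cst].
rewrite /l2ipT !mulr_sumr -big_split; apply: eq_bigr => -[n ltnN] _ /=.
rewrite EvecD ?Evec_cst; [|exact: diff_int|exact: coord_integrable_cst].
rewrite EvecB; try exact: inU_coord_integrable.
by rewrite l2ipZl l2ipDr l2ipZr; ring.
Qed.

Lemma Enorm2_shift a k1 k2 V Q : U V -> U Q ->
  Enorm2 P N tau Mss (fun n w => (V n w - k1 *: a n) - (Q n w - k2 *: a n))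
  = Enorm2 P N tau Mss (fun n w => V n w - Q n w)
    - 2 * (k1 - k2) * l2ipT N tau Mss a (fun n => E (V n) - E (Q n))
    + (k1 - k2) * (k1 - k2) * l2ipT N tau Mss a a.
Proof.
move=> UV UQ; rewrite /Enorm2 /l2ipT !mulr_sumr -sumrB -big_split.
apply: eq_bigr => -[n ltnN] _ /=.
have V_int := inU_coord_integrable UV ltnN; have Q_int := inU_coord_integrable UQ ltnN.
have D_int := coord_integrableB V_int Q_int.
have D_sq := rintegrable_l2ip_sqrB Mss_posdef (inU_coord_measurable UV ltnN)
  (inU_coord_measurable UQ ltnN) (UV n ltnN).2 (UQ n ltnN).2.
pose c := k1 - k2.
have aD_int := rintegrable_l2ip Mss (a n) D_int.
rewrite (eq_Rintegral _ (g := fun w => l2ip Mss (V n w - Q n w) (V n w - Q n w)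
    - 2 * c * l2ip Mss (a n) (V n w - Q n w) + c * c * l2ip Mss (a n) (a n))).
  rewrite RintegralD ?RintegralB ?RintegralZl ?Rintegral_cst_prob ?Rintegral_l2ip ?EvecB //.
  - by rewrite /c; ring.
  - exact: rintegrable_cst.
  - exact: rintegrableZl _ aD_int.
  - exact: rintegrableB D_sq (rintegrableZl _ aD_int).
  - exact: rintegrable_cst.
move=> w _; have -> : V n w - k1 *: a n - (Q n w - k2 *: a n) = V n w - Q n w - c *: a n.
  by apply/rowP => i; rewrite !mxE /c; ring.
rewrite (l2ip_sqrB Mss_posdef (V n w - Q n w)) !(l2ipZl, l2ipZr).
by rewrite (l2ipC (V n w - Q n w) _ Mss_posdef.1); ring.
Qed.

Variables (Stf : 'M[R]_m) (Stf_sym : Stf^T = Stf) (Lh : 'rV[R]_m -> 'rV[R]_m).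
Hypothesis Lh_laplacian : is_discrete_laplacian Mss Stf Lh.
Variables (bvec Pi1 : 'rV[R]_m) (Pi1_proj : is_proj_one Mss bvec Pi1).
Variables (X0h : 'rV[R]_m) (noise : @proc R d Omega m).
Variables (Xs Xmid : @proc R d Omega m -> @proc R d Omega m).
Hypothesis Xs_scheme : forall V, U V ->
  (forall w, Xs V 0%N w = X0h) /\
  forall n, (n < N)%N -> forall w,
    Xs V n.+1 w - Xs V n w = tau *: (Lh (Xs V n.+1 w) + V n w) + noise n w.
Hypothesis F_setT : forall n, F n setT.
Hypothesis Xmid_cexp : forall V, U V -> forall n, (n < N)%N -> forall i : 'I_m,
  cexp_version P (F n) (fun w => Xs V n.+1 w 0 i) (fun w => Xmid V n w 0 i).
Variable Mt : nat -> 'rV[R]_m.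
Hypotheses (MtN : Mt N = 0)
  (Mt_step : forall n, (n < N)%N -> Mt n.+1 - Mt n = tau *: (- Lh (Mt n) - Pi1)).

Lemma Evec_Xmid V n : U V -> (n < N)%N ->
  coord_integrable P (Xs V n.+1) /\ E (Xmid V n) = E (Xs V n.+1).
Proof.
move=> UV ltnN; split=> [i|]; first by case: (Xmid_cexp UV ltnN i).
apply/rowP => i; rewrite !mxE.
by case: (Xmid_cexp UV ltnN i) => _ _ _ /(_ _ (F_setT n)) int_eq; rewrite /Rintegral int_eq.
Qed.

(* The noise and the initial value cancel in the difference of two states. *)
Lemma state_diff_duality V V' w : U V -> U V' ->
  \sum_(n < N) tau * intD bvec (Xs V n.+1 w - Xs V' n.+1 w)
  = l2ipT N tau Mss Mt (fun n => V n w - V' n w).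
Proof.
move=> UV UV'; have [X0 X_step] := Xs_scheme UV; have [X0' X_step'] := Xs_scheme UV'.
apply: (discrete_duality Mss_posdef Stf_sym Lh_laplacian Pi1_proj MtN Mt_step
  (e := fun n => Xs V n w - Xs V' n w) (g := fun n => V n w - V' n w)).
  by rewrite X0 X0' subrr.
move=> n ltnN; rewrite (laplacianB Mss_posdef Lh_laplacian).
have := X_step n ltnN w; have := X_step' n ltnN w.
move=> step' step; apply/rowP => i.
by move/rowP/(_ i): step; move/rowP/(_ i): step'; rewrite !mxE => ? ?; lra.
Qed.

Lemma cost_diff V V' : U V -> U V' ->
  \sum_(n < N) tau * intD bvec (E (Xmid V n)) - \sum_(n < N) tau * intD bvec (E (Xmid V' n))
  = l2ipT N tau Mss Mt (fun n => E (V n) - E (V' n)).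
Proof.
move=> UV UV'.
have XD_int (n : 'I_N) : coord_integrable P (fun w => Xs V n.+1 w - Xs V' n.+1 w).
  exact: coord_integrableB (Evec_Xmid UV (ltn_ord n)).1 (Evec_Xmid UV' (ltn_ord n)).1.
have VD_int (n : 'I_N) : coord_integrable P (fun w => V n w - V' n w).
  exact: coord_integrableB (inU_coord_integrable UV (ltn_ord n))
                           (inU_coord_integrable UV' (ltn_ord n)).
rewrite -sumrB (eq_bigr (fun n : 'I_N =>
    \int[P]_w (tau * intD bvec (Xs V n.+1 w - Xs V' n.+1 w)))); last first.
  move=> n _; have [X_int X_E] := Evec_Xmid UV (ltn_ord n).
  have [X'_int X'_E] := Evec_Xmid UV' (ltn_ord n).
  rewrite RintegralZl //; last exact: rintegrable_intD (XD_int n).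
  by rewrite -mulrBr Rintegral_intD // EvecB // X_E X'_E /intD mulmxBl !mxE.
rewrite -(Rintegral_sum (index_enum 'I_N) (f := fun (n : 'I_N) w =>
  tau * intD bvec (Xs V n.+1 w - Xs V' n.+1 w))); last first.
  by move=> n; apply: rintegrableZl; exact: rintegrable_intD (XD_int n).
under eq_Rintegral do rewrite state_diff_duality //.
rewrite Rintegral_sum => [|n]; last exact/rintegrableZl/rintegrable_l2ip.
apply: eq_bigr => n _; rewrite RintegralZl ?Rintegral_l2ip ?EvecB //.
- exact: inU_coord_integrable (ltn_ord n).
- exact: inU_coord_integrable (ltn_ord n).
- exact: rintegrable_l2ip.
Qed.

End adapted_processes.

Lemma max_sub0_firmly_nonexpansive {R : realDomainType} (x y c : R) :
  (Num.max (x - c) 0 - Num.max (y - c) 0) ^+ 2 <=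
  (Num.max (x - c) 0 - Num.max (y - c) 0) * (x - y).
Proof.
by have [hx|hx] := leP (x - c) 0; have [hy|hy] := leP (y - c) 0; nra.
Qed.

Section halfspace_projection.
Context {R : realFieldType}.
Variables (K c : R) (K_gt0 : 0 < K).

Lemma halfspace_projection_ineq (k a b : R) :
  k * K = Num.max (a - c) 0 -> b <= c -> k * (b - a) + k * k * K <= 0.
Proof.
have [ha|ha] := leP (a - c) 0.
  by move=> /eqP; rewrite mulf_eq0 (gt_eqF K_gt0) orbF => /eqP -> _; rewrite !mul0r addr0.
move=> kK bc; have k_gt0 : 0 < k by rewrite -(pmulr_lgt0 _ K_gt0) kK.
rewrite -mulrA kK; nra.
Qed.

Lemma halfspace_projection_contraction (k1 k2 a b : R) :
  k1 * K = Num.max (a - c) 0 -> k2 * K = Num.max (b - c) 0 ->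
  (k1 - k2) * (k1 - k2) * K - 2 * (k1 - k2) * (a - b) <= 0.
Proof.
move=> k1K k2K; have := max_sub0_firmly_nonexpansive a b c.
rewrite -k1K -k2K -mulrBl => firm.
have : (k1 - k2) * (k1 - k2) * K <= (k1 - k2) * (a - b).
  by rewrite -(ler_pM2r K_gt0); nra.
have : 0 <= (k1 - k2) * (k1 - k2) * K by rewrite -expr2 mulr_ge0 ?sqr_ge0 ?ltW.
lra.
Qed.

End halfspace_projection.

Theorem mainTheorem8
  (R : realType) (d : measure_display) (Omega : measurableType d)
  (P : probability Omega R)
  (W : R -> Omega -> R) (HW : std_BM P W)
  (T : R) (N : nat) (HT : 0 < T) (HN : (0 < N)%N)
  (Htau : T / N%:R <= 1)
  (m : nat) (Mss Stf : 'M[R]_m) (bvec : 'rV[R]_m)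
  (HMss : sym_posdef Mss) (HStf : sym_posdef Stf)
  (Lh : 'rV[R]_m -> 'rV[R]_m) (HLh : is_discrete_laplacian Mss Stf Lh)
  (Pi1 : 'rV[R]_m) (HPi1 : is_proj_one Mss bvec Pi1)
  (* data: delta, Pi_h X_0, Pi_h sigma(t_n) *)
  (delta : R) (X0h : 'rV[R]_m) (sig : @proc R d Omega m)
  (Hsig : inU P N (fun n => natF P W (n%:R * (T / N%:R))) Mss sig)
  (* the discrete state X_{h tau}(V): values at grid points ... *)
  (Xs : @proc R d Omega m -> @proc R d Omega m)
  (HXs : forall V, inU P N (fun n => natF P W (n%:R * (T / N%:R))) Mss V ->
     (forall w, Xs V 0%N w = X0h) /\
     forall n, (n < N)%N -> forall w,
       Xs V n.+1 w - Xs V n w =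
         (T / N%:R) *: (Lh (Xs V n.+1 w) + V n w)
         + (W (n.+1%:R * (T / N%:R)) w - W (n%:R * (T / N%:R)) w) *: sig n w)
  (* ... and on (t_n, t_{n+1}): X(t) = E[X(t_{n+1}) | F_{t_n}] *)
  (Xmid : @proc R d Omega m -> @proc R d Omega m)
  (HXmid : forall V, inU P N (fun n => natF P W (n%:R * (T / N%:R))) Mss V ->
     forall n, (n < N)%N -> forall i : 'I_m,
       cexp_version P (natF P W (n%:R * (T / N%:R)))
         (fun w => Xs V n.+1 w 0 i) (fun w => Xmid V n w 0 i))
  (Mt Qt : nat -> 'rV[R]_m)
  (HMtN : Mt N = 0)
  (HMt : forall n, (n < N)%N ->
     Mt n.+1 - Mt n = (T / N%:R) *: (- Lh (Mt n) - Pi1))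
  (HQt0 : Qt 0%N = 0)
  (HQt : forall n, (n < N)%N ->
     Qt n.+1 - Qt n = (T / N%:R) *: (Lh (Qt n.+1) + Mt n))
  (HQpos : 0 < \sum_(n < N) (T / N%:R) * intD bvec (Qt n.+1))
  (rho : R) (Hrho : 0 < rho) :
  let tau := T / N%:R in
  let F := fun n : nat => natF P W (n%:R * tau) in
  let U := inU P N F Mss in
  (* \int_0^T \int_D E[X_{h tau}(V)] dx dt *)
  let J := fun V : @proc R d Omega m =>
             \sum_(n < N) tau * intD bvec (Evec P (Xmid V n)) in
  let Udelta := fun V => U V /\ J V <= delta in
  let intQ := \sum_(n < N) tau * intD bvec (Qt n.+1) in
  let mu := fun V => Num.max (J V - delta) 0 / (rho * intQ) in
  let Rh := fun V : @proc R d Omega m =>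
              (fun n w => V n w - (rho * mu V) *: Mt n) : @proc R d Omega m in
  (forall V Wc, U V -> Udelta Wc ->
     Ebr P N tau Mss (fun n w => V n w - Rh V n w)
                     (fun n w => Wc n w - Rh V n w) <= 0)
  /\
  (forall V Q, U V -> U Q ->
     Enorm2 P N tau Mss (fun n w => Rh V n w - Rh Q n w)
     <= Enorm2 P N tau Mss (fun n w => V n w - Q n w)).
Proof.
move=> tau F U J Udelta intQ mu Rh.
rewrite -/tau in HXs HMt HQt HQpos HXmid.
have F_measurable n A : F n A -> measurable A by case.
have F_setT n : F n setT by exact: natF_setT.
have J_diff V V' : U V -> U V' ->
    J V - J V' = l2ipT N tau Mss Mt (fun n => Evec P (V n) - Evec P (V' n)).
  exact: (cost_diff HMss F_measurable HStf.1 HLh HPi1 HXs F_setT HXmid HMtN HMt).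
have intQ_eq : intQ = l2ipT N tau Mss Mt Mt.
  exact: (discrete_duality HMss HStf.1 HLh HPi1 HMtN HMt HQt0 HQt).
have k_eq V : rho * mu V * intQ = Num.max (J V - delta) 0.
  by rewrite /mu; field; rewrite !gt_eqF.
split=> [V Wc UV [UWc JWc] | V Q UV UQ].
- rewrite /Rh (Ebr_shift tau HMss F_measurable) // -J_diff // -intQ_eq.
  exact: (halfspace_projection_ineq (K := intQ) HQpos (k_eq V) JWc).
- rewrite /Rh (Enorm2_shift tau HMss F_measurable) // -J_diff // -intQ_eq.
  have := halfspace_projection_contraction (K := intQ) HQpos (k_eq V) (k_eq Q).
  by rewrite -addrA gerDl addrC.
Qed.
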